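(* Assume the standing setting. Let $S$ be a subset of $U$ containing at most one end of $e_1$ (or a subset of $W$ containing at most one end of $e_2$), and let $S'\subseteq V(G)$ satisfy $N_G(S)\subseteq S'$ and $|S'|\ge 2$. Then $|S'|\ge |S|+2$.
   Context: Graphs may have multiple edges but no loops. An edge is admissible if it lies in some perfect matching; a connected graph with at least two vertices is matching covered if every edge is admissible; an edge $e$ of a matching covered graph $G$ is removable if $G-e$ is matching covered. A brick is a 3-connected nonbipartite graph $G$ such that $G-x-y$ has a perfect matching for all distinct $x,y$. A nonbipartite matching covered graph $G$ is near-bipartite if it has a pair of edges $\{e_1,e_2\}$ (a removable doubleton) such that $G-\{e_1,e_2\}$ is bipartite matching covered. $N_G(X)$ is the set of vertices outside $X$ with a neighbour in $X$. Standing setting: $G$ is a near-bipartite brick with removable doubleton $\{e_1,e_2\}$, $H=G-\{e_1,e_2\}$, and $(U,W)$ is the bipartition of $H$, labelled so that both ends of $e_1$ lie in $U$ and both ends of $e_2$ lie in $W$ (so $e_1$ is the only edge of $G$ with both ends in $U$ and $e_2$ the only edge with both ends in $W$). *)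

(* Multigraphs (parallel edges allowed, no loops) on a finite
   vertex type V with a finite edge type E; each edge e has two ends
   (ends e).1 and (ends e).2.  A (sub)graph is given by a vertex set VS and
   an edge set ES (edges of ES are assumed to have both ends in VS). *)
From mathcomp Require Import all_boot all_order.
Set Implicit Arguments. Unset Strict Implicit. Unset Printing Implicit Defensive.

Section Graphs.
Variables (V E : finType) (ends : E -> V * V).

Definition ends_set (e : E) : {set V} := [set (ends e).1; (ends e).2].

Definition inc (v : V) (e : E) : bool := v \in ends_set e.

Definition del_verts (X : {set V}) (ES : {set E}) : {set E} :=
  [set e in ES | [disjoint ends_set e & X]].

Definition perfect_matching (VS : {set V}) (ES : {set E}) (M : {set E}) : Prop :=
  M \subset ES /\ forall v, v \in VS -> #|[set e in M | inc v e]| = 1.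

Definition adj (ES : {set E}) : rel V :=
  fun x y => [exists e in ES, ((ends e).1 == x) && ((ends e).2 == y)
                           || ((ends e).1 == y) && ((ends e).2 == x)].

Definition connectedg (VS : {set V}) (ES : {set E}) : Prop :=
  forall x y, x \in VS -> y \in VS -> connect (adj ES) x y.

Definition bipartite_with (VS : {set V}) (ES : {set E}) (A B : {set V}) : Prop :=
  A :&: B = set0 /\ A :|: B = VS /\
  forall e, e \in ES ->
    ((ends e).1 \in A) && ((ends e).2 \in B) || ((ends e).1 \in B) && ((ends e).2 \in A).

Definition bipartite (VS : {set V}) (ES : {set E}) : Prop :=
  exists A B, bipartite_with VS ES A B.

Definition matching_covered (VS : {set V}) (ES : {set E}) : Prop :=
  2 <= #|VS| /\ connectedg VS ES /\
  forall e, e \in ES -> exists M, perfect_matching VS ES M /\ e \in M.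

Definition three_connected (VS : {set V}) (ES : {set E}) : Prop :=
  4 <= #|VS| /\
  forall X : {set V}, X \subset VS -> #|X| <= 2 ->
    connectedg (VS :\: X) (del_verts X ES).

Definition brick (VS : {set V}) (ES : {set E}) : Prop :=
  three_connected VS ES /\ ~ bipartite VS ES /\
  forall x y, x \in VS -> y \in VS -> x != y ->
    exists M, perfect_matching (VS :\ x :\ y) (del_verts [set x; y] ES) M.

Definition removable_doubleton (VS : {set V}) (ES : {set E}) (e1 e2 : E) : Prop :=
  e1 \in ES /\ e2 \in ES /\ e1 != e2 /\
  bipartite VS (ES :\ e1 :\ e2) /\ matching_covered VS (ES :\ e1 :\ e2).

Definition near_bipartite (VS : {set V}) (ES : {set E}) : Prop :=
  matching_covered VS ES /\ ~ bipartite VS ES /\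
  exists e1 e2, removable_doubleton VS ES e1 e2.

Definition nbhd (ES : {set E}) (X : {set V}) : {set V} :=
  [set y | (y \notin X) && [exists x in X, adj ES x y]].

End Graphs.

From mathcomp Require Import all_boot all_order.
From mathcomp Require Import zify.

Set Implicit Arguments.
Unset Strict Implicit.
Unset Printing Implicit Defensive.

(* Both alternatives of the hypothesis make S a stable set: the only edge of G
   with both ends on S's side of the bipartition is e1 (resp. e2), and S holds
   at most one of its ends.  The two ends of the other doubleton edge lie
   outside S, so we can pick distinct x, y outside S taking away as many
   vertices of N(S) as possible (min(2, |N(S)|)).  As G is a brick, G - x - y
   has a perfect matching, which maps S injectively into N(S) - x - y; hence
   |S| <= |N(S)| - 2 <= |S'| - 2 when |N(S)| >= 2, and S is empty otherwise. *)

Lemma exists_card_setD1 (T : finType) (N C : {set T}) :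
  N \subset C -> 0 < #|C| -> exists2 x, x \in C & #|N :\ x| = #|N|.-1.
Proof.
move=> sNC /card_gt0P[c cC].
have [->|[x xN]] := set_0Vmem N.
  by exists c => //; rewrite set0D cards0.
by exists x; [exact: subsetP xN | rewrite (cardsD1 x N) xN].
Qed.

Lemma exists_card_setD2 (T : finType) (N C : {set T}) :
  N \subset C -> 1 < #|C| ->
  exists x y, [/\ x \in C, y \in C, x != y & #|N :\ x :\ y| = #|N| - 2].
Proof.
move=> sNC C2; have [x xC Nx] := exists_card_setD1 sNC (ltnW C2).
have Cx : 0 < #|C :\ x| by rewrite (cardsD1 x) xC in C2.
have [y] := exists_card_setD1 (setSD [set x] sNC) Cx; rewrite !inE => /andP[yx yC] Ny.
by exists x, y; split; rewrite // 1?eq_sym // Ny Nx subn2.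
Qed.

Section Graphs.
Variables (V E : finType) (ends : E -> V * V).
Hypothesis noloop : forall e, (ends e).1 != (ends e).2.

Local Notation ends_set := (ends_set ends).
Local Notation inc := (inc ends).
Local Notation nbhd := (nbhd ends).

Definition other (e : E) (v : V) : V :=
  if (ends e).1 == v then (ends e).2 else (ends e).1.

Definition stable (S : {set V}) : Prop := forall e, ~~ (ends_set e \subset S).

Lemma card_ends_set e : #|ends_set e| = 2.
Proof. by rewrite cards2 noloop. Qed.

Lemma other_in e v : other e v \in ends_set e.
Proof. by rewrite /other !inE; case: ifP; rewrite eqxx ?orbT. Qed.

Lemma other_neq e v : other e v != v.
Proof. by rewrite /other; case: ifP => [/eqP<-|/negbT //]; rewrite eq_sym noloop. Qed.

Lemma ends_set_other e v : inc v e -> ends_set e = [set v; other e v].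
Proof.
rewrite /inc /ends_set /other !inE.
by case/orP=> /eqP<-; rewrite ?eqxx //; case: eqP => [->|_]; rewrite // setUC.
Qed.

Lemma adj_ends (ES : {set E}) e u w :
  e \in ES -> u \in ends_set e -> w \in ends_set e -> u != w -> adj ends ES u w.
Proof.
move=> eES; rewrite !inE => uE wE uw; apply/existsP; exists e; rewrite eES /=.
by case/orP: uE uw => /eqP-> /=; case/orP: wE => /eqP->; rewrite !eqxx ?orbT.
Qed.

Lemma nbhd_subsetC (ES : {set E}) S : nbhd ES S \subset ~: S.
Proof. by apply/subsetP => v; rewrite !inE => /andP[]. Qed.

Lemma stable_other S e s : stable S -> s \in S -> inc s e -> other e s \notin S.
Proof.
move=> stS sS /ends_set_other eE; apply: contra (stS e) => oS.
by rewrite eE subUset !sub1set sS.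
Qed.

Section PerfectMatching.
Variables (VS : {set V}) (ES M : {set E}).
Hypothesis pmM : perfect_matching ends VS ES M.

Lemma matching_edge_at v : v \in VS -> exists2 e, e \in M & inc v e.
Proof.
case: pmM => _ /[apply] /eqP/cards1P[e Me].
by have := set11 e; rewrite -Me inE => /andP[]; exists e.
Qed.

Lemma matching_edge_uniq v e e' :
  v \in VS -> e \in M -> e' \in M -> inc v e -> inc v e' -> e = e'.
Proof.
case: pmM => _ /[apply] /eqP/cards1P[e0 Me0] eM e'M ve ve'.
have : e \in [set e0] by rewrite -Me0 inE eM ve.
have : e' \in [set e0] by rewrite -Me0 inE e'M ve'.
by rewrite !inE => /eqP-> /eqP->.
Qed.

Definition mate (v : V) : V :=
  if [pick e in M | inc v e] is Some e then other e v else v.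

Lemma mateP v : v \in VS -> exists2 e, e \in M & inc v e /\ mate v = other e v.
Proof.
move=> vVS; rewrite /mate; case: pickP => [e /andP[eM ve] | none]; first by exists e.
have [e eM ve] := matching_edge_at vVS; by move: (none e); rewrite /= eM ve.
Qed.

End PerfectMatching.

Lemma stable_card_le_nbhd (x y : V) (M : {set E}) (S : {set V}) :
  perfect_matching ends ([set: V] :\ x :\ y) (del_verts ends [set x; y] [set: E]) M ->
  x \notin S -> y \notin S -> stable S ->
  #|S| <= #|nbhd [set: E] S :\ x :\ y|.
Proof.
set VS := [set: V] :\ x :\ y => pmM xS yS stS.
have inVS v : v \notin [set x; y] -> v \in VS by rewrite !inE negb_or andbT andbC.
have SVS s : s \in S -> s \in VS.
  move=> sS; apply: inVS; rewrite !inE negb_or.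
  by apply/andP; split; apply/eqP => sv; [move: xS | move: yS]; rewrite -sv sS.
have endsVS e v : e \in M -> v \in ends_set e -> v \in VS.
  move=> eM ve; apply: inVS; case: pmM => /subsetP/(_ e eM); rewrite inE => /andP[_].
  by move=> /disjointFr->.
rewrite -(card_in_imset (f := mate M)).
  apply: subset_leq_card; apply/subsetP => _ /imsetP[s sS ->].
  have [e eM [se ->]] := mateP pmM (SVS s sS).
  have oVS := endsVS e _ eM (other_in e s).
  move: oVS; rewrite !inE => /andP[-> /andP[-> _]] /=.
  rewrite (stable_other stS sS se); apply/existsP; exists s; rewrite sS.
  by apply: adj_ends (in_setT e) se (other_in e s) _; rewrite eq_sym other_neq.
move=> s1 s2 s1S s2S.
have [e eM [s1e ->]] := mateP pmM (SVS s1 s1S).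
have [e' e'M [s2e' ->]] := mateP pmM (SVS s2 s2S).
move=> same_mate.
have ee' : e = e'.
  apply: (matching_edge_uniq pmM (endsVS e _ eM (other_in e s1))) eM e'M _ _.
    exact: other_in.
  by rewrite same_mate; apply: other_in.
move: (ends_set_other s1e) (ends_set_other s2e') (other_neq e s1).
subst e'; rewrite -same_mate => -> /setP/(_ s1).
by rewrite !inE eqxx => /esym/orP[/eqP // | /eqP <-]; rewrite eqxx.
Qed.

Lemma bipartite_with_sym (VS A B : {set V}) (ES : {set E}) :
  bipartite_with ends VS ES A B -> bipartite_with ends VS ES B A.
Proof.
case=> AB [AUB cross]; split; first by rewrite setIC.
split=> [|e /cross]; first by rewrite setUC.
by rewrite orbC.
Qed.

Lemma bipartite_edge_not_sub (VS A B : {set V}) (ES : {set E}) (e : E) :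
  bipartite_with ends VS ES A B -> e \in ES -> ~~ (ends_set e \subset A).
Proof.
case=> /eqP; rewrite setI_eq0 => dAB [_ cross] /cross.
rewrite /ends_set subUset !sub1set.
by case/orP => /andP[a b];
  [rewrite (disjointFl dAB b) andbF | rewrite (disjointFl dAB a)].
Qed.

Lemma doubleton_inner_edge (A B : {set V}) (f g e : E) :
  bipartite_with ends [set: V] ([set: E] :\ f :\ g) A B ->
  ends_set g \subset B -> ends_set e \subset A -> e = f.
Proof.
move=> bip gB eA; case: (eqVneq e f) => // ef.
case: (eqVneq e g) => [eg | eg]; last first.
  by move: (bipartite_edge_not_sub bip (e := e)); rewrite !inE ef eg eA => /(_ isT).
subst e; have [/eqP AB _] := bip; rewrite setI_eq0 in AB.
have g1 : (ends g).1 \in ends_set g by rewrite !inE eqxx.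
by move: (subsetP gB _ g1); rewrite (disjointFr AB (subsetP eA _ g1)).
Qed.

Lemma stable_of_inner_edge (A S : {set V}) (f : E) :
  (forall e, ends_set e \subset A -> e = f) ->
  S \subset A -> #|S :&: ends_set f| <= 1 -> stable S.
Proof.
move=> inner SA Sf e; apply/negP => eS.
have ef := inner e (subset_trans eS SA); subst f.
by move: Sf; rewrite (setIidPr eS) card_ends_set.
Qed.

Lemma doubleton_side_stable (A B S : {set V}) (f g : E) :
  bipartite_with ends [set: V] ([set: E] :\ f :\ g) A B ->
  ends_set g \subset B -> S \subset A -> #|S :&: ends_set f| <= 1 ->
  stable S /\ 2 <= #|~: S|.
Proof.
move=> bip gB SA Sf; split.
  exact: stable_of_inner_edge (fun e => doubleton_inner_edge bip gB) SA Sf.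
have [/eqP dAB _] := bip; rewrite setI_eq0 in dAB.
rewrite -(card_ends_set g) subset_leq_card //; apply/subsetP => v /(subsetP gB) vB.
by rewrite inE; apply: contraL vB => /(subsetP SA) vA; rewrite (disjointFr dAB vA).
Qed.

End Graphs.

Theorem mainTheorem5 (V E : finType) (ends : E -> V * V)
  (noloop : forall e, (ends e).1 != (ends e).2)
  (e1 e2 : E) (U W : {set V})
  (Hbrick : brick ends [set: V] [set: E])
  (Hnb : near_bipartite ends [set: V] [set: E])
  (Hrd : removable_doubleton ends [set: V] [set: E] e1 e2)
  (HUW : bipartite_with ends [set: V] ([set: E] :\ e1 :\ e2) U W)
  (He1 : ends_set ends e1 \subset U)
  (He2 : ends_set ends e2 \subset W)
  (S S' : {set V})
  (HS : (S \subset U /\ #|S :&: ends_set ends e1| <= 1) \/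
        (S \subset W /\ #|S :&: ends_set ends e2| <= 1))
  (HN : nbhd ends [set: E] S \subset S')
  (HS' : 2 <= #|S'|) :
  #|S| + 2 <= #|S'|.
Proof.
have [stS outS] : stable ends S /\ 2 <= #|~: S|.
  case: HS => [[SU S1] | [SW S2]].
    exact: (doubleton_side_stable noloop HUW He2 SU S1).
  have HWU : bipartite_with ends [set: V] ([set: E] :\ e2 :\ e1) W U.
    by apply: bipartite_with_sym; rewrite setDDl setUC -setDDl.
  exact: (doubleton_side_stable noloop HWU He1 SW S2).
have [x [y [xS yS xy card_Nxy]]] := exists_card_setD2 (nbhd_subsetC ends [set: E] S) outS.
rewrite !inE in xS yS.
have [_ [_ pm_xy]] := Hbrick.
have [M pmM] := pm_xy x y (in_setT x) (in_setT y) xy.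
have := stable_card_le_nbhd noloop pmM xS yS stS.
have := subset_leq_card HN.
lia.
Qed.
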